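(* Let $H$ be a finite group, $N \trianglelefteq H$, and $\pi : H \to H/N$ the projection. Let $M_1, \dots, M_k$ be maximal subgroups of $H$ in general position such that $\{M_1 \cap N, \dots, M_l \cap N\}$ is in general position and $M_j \supseteq \bigcap_{1 \leq i \leq l} (M_i \cap N)$ for every $j > l$. Let $R = \bigcap_{1 \leq i \leq l} M_i$. Then $l \leq \mathrm{MaxDim}(H) - \mathrm{MaxDim}(H/N, \pi(R))$. Moreover, if $N/\Phi(N)$ is abelian, then $l \leq \mathrm{MaxDim}(H) - \mathrm{MaxDim}(H/N)$ and $l \leq \mathrm{MaxDim}_H(N)$, where $H$ acts on $N$ by conjugation.
   Context: All groups are finite. A finite set $\{H_1,\dots,H_n\}$ of subgroups of a group $G$ is in general position if for every $1 \le j \le n$, $\bigcap_{i \neq j} H_i \supsetneq \bigcap_{i} H_i$. $\mathrm{MaxDim}(G)$ is the largest cardinality of a collection of maximal subgroups of $G$ in general position. For a subgroup $A \le G$, $\mathrm{MaxDim}(G, A)$ is the largest $k$ such that there exist maximal subgroups $M_1,\dots,M_k$ of $G$ with $\{M_1 \cap A, \dots, M_k \cap A\}$ in general position. If a group $B$ acts on $G$, $\mathrm{MaxDim}_B(G)$ is the largest cardinality of a collection of maximal $B$-invariant (proper) subgroups of $G$ that is in general position. $\Phi(N)$ is the Frattini subgroup of $N$, the intersection of all maximal subgroups of $N$. *)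

From mathcomp Require Import all_boot all_fingroup all_solvable.
Set Implicit Arguments. Unset Strict Implicit. Unset Printing Implicit Defensive.
Import GroupScope.

(* The ambient A gives the value of the empty intersection. *)
Definition gen_pos (gT : finGroupType) (A : {set gT}) (n : nat)
    (H : 'I_n -> {set gT}) : bool :=
  [forall j : 'I_n,
    (A :&: \bigcap_(i < n) H i) \proper (A :&: \bigcap_(i < n | i != j) H i)].

(* A family in general position in A
   has size <= #|A| <= #|gT|, so the bound #|gT| loses nothing. *)
Definition MaxDimIn (gT : finGroupType) (G A : {set gT}) : nat :=
  \max_(n < #|gT|.+1 |
        [exists f : {ffun 'I_n -> {group gT}},
           [forall i, maximal (f i) G] &&
           gen_pos A (fun i => (f i : {set gT}) :&: A)]) n.

Definition MaxDim (gT : finGroupType) (G : {set gT}) : nat := MaxDimIn G G.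

(* MaxDim_H(N) for H acting on N by conjugation: largest family of maximal
   H-invariant proper subgroups of N in general position (ambient N). *)
Definition MaxDimConj (gT : finGroupType) (H N : {set gT}) : nat :=
  \max_(n < #|gT|.+1 |
        [exists f : {ffun 'I_n -> {group gT}},
           [forall i, maxgroup (f i : {set gT})
              (fun K : {group gT} => (K \proper N) && (H \subset 'N(K)))] &&
           gen_pos N (fun i => (f i : {set gT}))]) n.

From mathcomp Require Import all_boot all_fingroup all_solvable.
Set Implicit Arguments. Unset Strict Implicit. Unset Printing Implicit Defensive.
Import GroupScope.

(* The M_i (i < l), followed by the preimages in H of maximal subgroups of
   H/N in general position relative to R/N, are maximal subgroups of H in
   general position: witnesses for the M_i can be taken in N, which lies in
   every preimage, and witnesses for the preimages lift to R, which lies in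
   every M_i. Moreover Phi(N) lies in every maximal subgroup of H, so when
   N/Phi(N) is abelian each M_i :&: N contains N' and is normal in H. Then
   the intersection of the M_i :&: N with i < j is a normal subgroup of H not
   contained in M_j, hence supplements M_j; by induction RN = H, that is
   R/N = H/N. The same supplement argument shows that the M_i :&: N are
   maximal H-invariant subgroups of N. *)

Section GeneralPosition.

Variable gT : finGroupType.
Implicit Types A : {set gT}.

Lemma gen_posP A n (F : 'I_n -> {set gT}) :
  reflect (forall j, exists x, [/\ x \in A, forall i, i != j -> x \in F i
                                 & x \notin F j])
          (gen_pos A F).
Proof.
apply: (iffP forallP) => [posF j | witF j].
  have /properP[_ [x]] := posF j.
  rewrite !inE => /andP[xA /bigcapP xF]; rewrite xA /= => nxF.
  exists x; split=> //; apply: contra nxF => xFj; apply/bigcapP => i _.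
  by case: (eqVneq i j) => [-> // | ]; apply: xF.
have [x [xA xF nxF]] := witF j; apply/properP; split.
  by apply: setIS; apply/bigcapsP => i _; apply: bigcap_inf.
exists x; first by rewrite inE xA; apply/bigcapP.
by rewrite inE xA; apply: contra nxF => /bigcapP; apply.
Qed.

Lemma eq_gen_pos A n (F1 F2 : 'I_n -> {set gT}) :
  F1 =1 F2 -> gen_pos A F1 = gen_pos A F2.
Proof.
by move=> eF; apply: eq_forallb => j; congr (_ :&: _ \proper _ :&: _);
  apply: eq_bigr.
Qed.

Lemma gen_pos_setIr A n (F : 'I_n -> {set gT}) :
  gen_pos A (fun i => F i :&: A) = gen_pos A F.
Proof.
apply/gen_posP/gen_posP => witF j; have [x [xA xF nxF]] := witF j;
  exists x; split=> // [i /xF | ]; rewrite ?inE ?xA ?andbT //.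
by move: nxF; rewrite inE xA andbT.
Qed.

Lemma gen_pos_comp A m n (F : 'I_n -> {set gT}) (h : 'I_m -> 'I_n) :
  injective h -> gen_pos A F -> gen_pos A (F \o h).
Proof.
move=> inj_h /gen_posP witF; apply/gen_posP => j.
have [x [xA xF nxF]] := witF (h j).
by exists x; split=> // i; rewrite -(inj_eq inj_h); apply: xF.
Qed.

Lemma gen_pos_card A n (F : 'I_n -> {set gT}) : gen_pos A F -> n <= #|A|.
Proof.
move/gen_posP/fin_all_exists => [w wP].
have inj_w : injective w.
  move=> i j eij; apply/eqP/negPn/negP => nij.
  have [_ _ nwiF] := wP i; have [_ wjF _] := wP j.
  by move: nwiF; rewrite eij wjF.
rewrite -[n]card_ord -(card_imset _ inj_w); apply: subset_leq_card.
by apply/subsetP => _ /imsetP[j _ ->]; case: (wP j).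
Qed.

End GeneralPosition.

Lemma gen_pos_morphpre (gT rT : finGroupType) (D : {group gT})
    (f : {morphism D >-> rT}) (A : {set gT}) n (F : 'I_n -> {set rT}) :
  A \subset D -> gen_pos (f @* A) F -> gen_pos A (fun i => f @*^-1 F i).
Proof.
move=> sAD /gen_posP witF; apply/gen_posP => j.
have [_ [/morphimP[x Dx Ax ->] xF nxF]] := witF j.
exists x; split=> // [i /xF | ]; first exact: mem_morphpre.
by apply: contra nxF => /morphpreP[].
Qed.

Definition fcat (T : Type) l n (F : 'I_l -> T) (G : 'I_n -> T) (i : 'I_(l + n)) : T :=
  match split i with inl a => F a | inr b => G b end.

Lemma fcat_lshift (T : Type) l n (F : 'I_l -> T) (G : 'I_n -> T) a :
  fcat F G (lshift n a) = F a.
Proof. by rewrite /fcat (unsplitK (inl _ a)). Qed.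

Lemma fcat_rshift (T : Type) l n (F : 'I_l -> T) (G : 'I_n -> T) b :
  fcat F G (rshift l b) = G b.
Proof. by rewrite /fcat (unsplitK (inr _ b)). Qed.

Lemma fcat_comp (T U : Type) (h : T -> U) l n (F : 'I_l -> T) (G : 'I_n -> T) :
  (fun i => h (fcat F G i)) =1 fcat (h \o F) (h \o G).
Proof. by move=> i; rewrite /fcat; case: split. Qed.

Lemma gen_pos_fcat (gT : finGroupType) (A B C : {set gT}) l n
    (F : 'I_l -> {set gT}) (G : 'I_n -> {set gT}) :
  B \subset A -> C \subset A ->
  gen_pos B F -> B \subset \bigcap_i G i ->
  gen_pos C G -> C \subset \bigcap_i F i ->
  gen_pos A (fcat F G).
Proof.
move=> sBA sCA /gen_posP witF /bigcapsP sBG /gen_posP witG /bigcapsP sCF.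
apply/gen_posP => j; case: (split_ordP j) => [a -> | b ->].
  have [x [xB xF nxF]] := witF a; exists x; rewrite fcat_lshift.
  split=> [|i|//]; first exact: subsetP xB.
  case: (split_ordP i) => [a' -> | b' ->] ne; rewrite ?fcat_lshift ?fcat_rshift.
    by apply: xF; apply: contraNneq ne => ->.
  exact: subsetP (sBG b' isT) x xB.
have [x [xC xG nxG]] := witG b; exists x; rewrite fcat_rshift.
split=> [|i|//]; first exact: subsetP xC.
case: (split_ordP i) => [a' -> | b' ->] ne; rewrite ?fcat_lshift ?fcat_rshift.
  exact: subsetP (sCF a' isT) x xC.
by apply: xG; apply: contraNneq ne => ->.
Qed.

Section MaxDimBounds.

Variable gT : finGroupType.
Implicit Types G A H N : {set gT}.

Lemma leq_MaxDimIn G A n (f : 'I_n -> {group gT}) :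
  (forall i, maximal (f i) G) -> gen_pos A (fun i => f i :&: A) ->
  n <= MaxDimIn G A.
Proof.
move=> maxf posf; have ltn : n < #|gT|.+1.
  by rewrite ltnS (leq_trans (gen_pos_card posf)) ?max_card.
apply: (@leq_bigmax_cond _ _ (fun i : 'I_#|gT|.+1 => val i) (Ordinal ltn)).
apply/existsP; exists [ffun i => f i]; apply/andP; split.
  by apply/forallP => i; rewrite ffunE.
by rewrite (eq_gen_pos _ (F2 := fun i => f i :&: A)) // => i; rewrite ffunE.
Qed.

Lemma MaxDimIn_attained G A :
  exists f : 'I_(MaxDimIn G A) -> {group gT},
    (forall i, maximal (f i) G) /\ gen_pos A (fun i => f i :&: A).
Proof.
pose P (n : 'I_#|gT|.+1) := [exists f : {ffun 'I_n -> {group gT}},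
  [forall i, maximal (f i) G] && gen_pos A (fun i => (f i : {set gT}) :&: A)].
have P_gt0 : 0 < #|P|.
  apply/card_gt0P; exists ord0; apply/existsP; exists [ffun i => 1%G].
  by rewrite /gen_pos; apply/andP; split; apply/forallP; case.
have [n /existsP[f /andP[/forallP maxf posf]] maxP] :=
  eq_bigmax_cond (fun i : 'I_#|gT|.+1 => val i) P_gt0.
by rewrite /MaxDimIn -/P maxP; exists f.
Qed.

Lemma leq_MaxDimConj H N n (f : 'I_n -> {group gT}) :
  (forall i, maxgroup (f i : {set gT})
               (fun K : {group gT} => (K \proper N) && (H \subset 'N(K)))) ->
  gen_pos N (fun i => f i : {set gT}) ->
  n <= MaxDimConj H N.
Proof.
move=> maxf posf; have ltn : n < #|gT|.+1.
  by rewrite ltnS (leq_trans (gen_pos_card posf)) ?max_card.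
apply: (@leq_bigmax_cond _ _ (fun i : 'I_#|gT|.+1 => val i) (Ordinal ltn)).
apply/existsP; exists [ffun i => f i]; apply/andP; split.
  by apply/forallP => i; rewrite ffunE.
by rewrite (eq_gen_pos _ (F2 := fun i => f i : {set gT})) // => i; rewrite ffunE.
Qed.

End MaxDimBounds.

Section MaximalSubgroups.

Variable gT : finGroupType.
Implicit Types H K M N R : {group gT}.

Lemma maximal_mul_norm M K H :
  maximal M H -> K \subset H -> M \subset 'N(K) -> ~~ (K \subset M) -> M * K = H.
Proof.
move=> maxM sKH nKM nsKM; have sMH := proper_sub (maxgroupp maxM).
rewrite -norm_joinEl //; apply/eqP; rewrite eqEproper join_subG sMH sKH /=.
apply: contra nsKM => pMK_H; case/maxgroupP: maxM => _ maxM.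
by rewrite -(maxM (M <*> K)%G pMK_H (joing_subl M K)) joing_subr.
Qed.

Lemma maximal_modular M K N H :
  maximal M H -> N \subset H -> K \subset N -> M \subset 'N(K) ->
  ~~ (K \subset M) -> (N :&: M) * K = N.
Proof.
move=> maxM sNH sKN nKM nsKM.
by rewrite group_modr // (maximal_mul_norm maxM (subset_trans sKN sNH)) ?(setIidPl sNH).
Qed.

Lemma Phi_sub_maximal M N H : N <| H -> maximal M H -> 'Phi(N) \subset M.
Proof.
move=> /andP[sNH nNH] maxM; apply/idPn => nsPhiM.
have sMH := proper_sub (maxgroupp maxM).
have nPhiM := subset_trans sMH (char_norm_trans (Phi_char N) nNH).
have defN := maximal_modular maxM sNH (Phi_sub N) nPhiM nsPhiM.
have nPhiNM : N :&: M \subset 'N('Phi(N)).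
  exact: subset_trans (subsetIl N M) (normal_norm (Phi_normal N)).
have /Phi_nongen : 'Phi(N) <*> (N :&: M)%G = N by rewrite joingC norm_joinEl.
rewrite genGid => /setIidPl sNM.
by rewrite (subset_trans (Phi_sub N) sNM) in nsPhiM.
Qed.

(* Since N' <= Phi(N) <= M, the intersection M :&: N is normal in N, and M
   normalizes it; together M and N generate H unless N <= M. *)
Lemma norm_setI_maximal M N H :
  N <| H -> maximal M H -> abelian (N / 'Phi(N)) -> H \subset 'N(M :&: N).
Proof.
move=> nsNH maxM abN; have /andP[sNH nNH] := nsNH.
have sMH := proper_sub (maxgroupp maxM).
have nMN_N : N \subset 'N(M :&: N).
  apply/normal_norm/sub_der1_normal; last exact: subsetIr.
  apply: subset_trans (der1_min (normal_norm (Phi_normal N)) abN) _.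
  by rewrite subsetI (Phi_sub_maximal nsNH maxM) Phi_sub.
have [sNM | nsNM] := boolP (N \subset M); first by rewrite (setIidPr sNM).
rewrite -(maximal_mul_norm maxM sNH (subset_trans sMH nNH) nsNM) mul_subG //.
by rewrite normsI ?normG ?(subset_trans sMH nNH).
Qed.

Lemma maxgroup_setI_maximal M N H :
  N <| H -> maximal M H -> ~~ (N \subset M) -> H \subset 'N(M :&: N) ->
  maxgroup (M :&: N) (fun K : {group gT} => (K \proper N) && (H \subset 'N(K))).
Proof.
move=> /andP[sNH nNH] maxM nsNM nMN_H; have sMH := proper_sub (maxgroupp maxM).
apply/maxgroupP; split.
  by rewrite nMN_H andbT properE subsetIr subsetI subxx andbT.
move=> K /andP[pKN nKH] sMN_K; have sKN := proper_sub pKN.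
suff sKM : K \subset M by apply/eqP; rewrite eqEsubset sMN_K subsetI sKM sKN.
apply/idPn => nsKM.
have defN := maximal_modular maxM sNH sKN (subset_trans sMH nKH) nsKM.
have sNK : N \subset K by rewrite -defN mul_subG // setIC.
by rewrite properE sNK andbF in pKN.
Qed.

Lemma mulg_setI_eq R M K N H :
  R * N = H -> M * K = H -> K \subset R :&: N -> (R :&: M) * N = H.
Proof.
move=> defH defMK; rewrite subsetI => /andP[sKR sKN].
have sRH : R \subset H by rewrite -defH mulG_subl.
by rewrite -(mulSGid sKN) mulgA group_modr // defMK (setIidPl sRH).
Qed.

End MaximalSubgroups.

Section NormalSubgroup.

Variable gT : finGroupType.
Implicit Types H N : {group gT}.

Lemma leq_MaxDimIn_quotient H N (R : {set gT}) l (M : 'I_l -> {group gT}) :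
  N <| H -> (forall i, maximal (M i) H) -> gen_pos N (fun i => M i :&: N) ->
  R \subset H -> R \subset \bigcap_i M i ->
  l + MaxDimIn (H / N) (R / N) <= MaxDim H.
Proof.
move=> nsNH maxM posM sRH sRM; have /andP[sNH nNH] := nsNH.
have [f [maxf posf]] := MaxDimIn_attained (H / N) (R / N).
pose g b := (coset N @*^-1 f b)%G.
apply: (leq_MaxDimIn (f := fcat M g)) => [i | ].
  case: (split_ordP i) => [a -> | b ->]; rewrite ?fcat_lshift ?fcat_rshift //.
  by rewrite -(quotientGK nsNH) cosetpre_maximal.
rewrite gen_pos_setIr (eq_gen_pos _ (fcat_comp (@gval gT) M g)).
apply: (gen_pos_fcat sNH sRH _ _ _ sRM).
- by rewrite -gen_pos_setIr.
- by apply/bigcapsP => b _; apply: sub_cosetpre.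
- by apply: gen_pos_morphpre (subset_trans sRH nNH) _; rewrite -gen_pos_setIr.
Qed.

Lemma mul_bigcap_maximal H N l (M : 'I_l -> {group gT}) :
  N <| H -> (forall i, maximal (M i) H) -> (forall i, H \subset 'N(M i :&: N)) ->
  gen_pos N (fun i => M i :&: N) -> (H :&: \bigcap_i M i) * N = H.
Proof.
move=> nsNH; have /andP[sNH nNH] := nsNH.
elim: l M => [|l IHl] M maxM nMN_H posM; first by rewrite big_ord0 setIT mulGSid.
pose w := widen_ord (leqnSn l).
have inj_w : injective w by move=> i j /(congr1 val) /= /val_inj.
pose K := (N :&: \bigcap_(i < l) (M (w i) :&: N))%G.
rewrite big_ord_recr setIA /=.
apply: (@mulg_setI_eq _ _ _ K).
- exact: IHl (gen_pos_comp inj_w posM).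
- apply: maximal_mul_norm (maxM ord_max) _ _ _; first by rewrite subIset ?sNH.
    apply: subset_trans (proper_sub (maxgroupp (maxM ord_max))) _.
    by rewrite normsI // norms_bigcap //; apply/bigcapsP => i _; apply: nMN_H.
  have /gen_posP/(_ ord_max)[x [xN xM nxM]] := posM.
  apply/subsetPn; exists x; last by apply: contra nxM; rewrite inE xN andbT.
  rewrite inE xN; apply/bigcapP => i _; apply: xM.
  by rewrite -val_eqE /= neq_ltn ltn_ord.
- rewrite subsetI subsetIl andbT subsetI subIset ?sNH //=.
  by apply/bigcapsP => i _; apply: subset_trans (subsetIr _ _) _;
    apply: subset_trans (bigcap_inf i isT) (subsetIl _ _).
Qed.

Lemma leq_MaxDimConj_maximal H N l (M : 'I_l -> {group gT}) :
  N <| H -> (forall i, maximal (M i) H) -> (forall i, H \subset 'N(M i :&: N)) ->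
  gen_pos N (fun i => M i :&: N) -> l <= MaxDimConj H N.
Proof.
move=> nsNH maxM nMN_H posM.
apply: (leq_MaxDimConj (f := fun i => M i :&: N)%G) => // i.
apply: maxgroup_setI_maximal => //.
have /gen_posP/(_ i)[x [xN _ nxM]] := posM.
by apply/subsetPn; exists x; last by apply: contra nxM; rewrite inE xN andbT.
Qed.

End NormalSubgroup.

Theorem proposition3p3 (gT : finGroupType) (H N : {group gT}) (k l : nat)
    (M : 'I_k -> {group gT}) (hlk : l <= k) :
  N <| H ->
  (forall i, maximal (M i) H) ->
  gen_pos H (fun i => (M i : {set gT})) ->
  gen_pos N (fun i : 'I_l => (M (widen_ord hlk i) : {set gT}) :&: N) ->
  (forall j : 'I_k, l <= j ->
     N :&: \bigcap_(i < k | i < l) (M i : {set gT}) \subset M j) ->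
  let R := H :&: \bigcap_(i < k | i < l) (M i : {set gT}) in
  l + MaxDimIn (H / N) (R / N) <= MaxDim H /\
  (abelian (N / 'Phi(N)) ->
     l + MaxDim (H / N) <= MaxDim H /\ l <= MaxDimConj H N).
Proof.
move=> nsNH maxM _ posM _ R.
pose Ml i := M (widen_ord hlk i).
have maxMl i : maximal (Ml i) H := maxM _.
have defR : R = H :&: \bigcap_i Ml i by rewrite /R big_ord_narrow.
have bound_R : l + MaxDimIn (H / N) (R / N) <= MaxDim H.
  by apply: (leq_MaxDimIn_quotient (M := Ml)); rewrite // defR ?subsetIl ?subsetIr.
split=> // abN; have nMN_H i := norm_setI_maximal nsNH (maxMl i) abN.
split; last exact: leq_MaxDimConj_maximal maxMl nMN_H posM.
have defRN : R / N = H / N.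
  by rewrite defR -quotientMidr (mul_bigcap_maximal nsNH maxMl nMN_H posM).
by move: bound_R; rewrite defRN.
Qed.
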